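(* Let $M,\widetilde M\in B$ with $M\le'\widetilde M$. Then there exist a strictly increasing map $\varphi\colon\mathbb{N}\to\mathbb{N}$, a monomial $N\in B_1$ and a monomial $P=z_{t_1}\cdots z_{t_k}$ ($k\ge0$) in the odd variables such that $N\,\widetilde\varphi(M)\,P\equiv\widetilde M\pmod I$.
   Context: Let $D$ be an infinite commutative unital integral domain; $Y=\{y_1,y_2,\dots\}$ (even) and $Z=\{z_1,z_2,\dots\}$ (odd) disjoint sets of variables, $X=Y\cup Z$, $D\langle X\rangle$ the free unital associative $D$-algebra, $L\langle X\rangle$ its Lie subalgebra (bracket $[a,b]=ab-ba$) generated by $X$ with induced grading. An ideal of weak graded identities is a two-sided ideal of $D\langle X\rangle$ closed under all endomorphisms mapping each $y_i$ into $L\langle X\rangle^{(0)}$ and each $z_i$ into $L\langle X\rangle^{(1)}$; $I$ is the smallest such ideal containing $y_1y_2-y_2y_1$, $z_1z_2z_3-z_3z_2z_1$, $y_1z_1+z_1y_1$. $B$ is the set of monomials $y_{a_1}\cdots y_{a_k}$ ($k\ge0$, $a_1\le\dots\le a_k$) — forming $B_1$ — and $y_{a_1}\cdots y_{a_k}z_{c_1}z_{d_1}z_{c_2}z_{d_2}\cdots z_{c_m}z_{d_m}$ or the same word with the final $z_{d_m}$ omitted, where $m\ge1$, $a$'s, $c$'s and present $d$'s nondecreasing — forming $B_2$. Sequences: $V(Q_1)$ is the set of sequences $(s_i)_{i\ge1}$ in $\mathbb{N}_0$ with finitely many nonzero terms; triples of such sequences are identified with sequences $(w_i)_{i\ge1}$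 in $\mathbb{N}_0^3$. Define $\xi(y_{a_1}\cdots y_{a_k})=u^{(1)}$ and $\xi(y_{a_1}\cdots y_{a_k}z_{c_1}z_{d_1}\cdots)=(u^{(1)},u^{(2)},u^{(3)})$, where $u^{(1)}_i=\#\{j:a_j=i\}$, $u^{(2)}_i=\#\{j:c_j=i\}$, $u^{(3)}_i=\#\{j:d_j=i\}$. For sequences $u=(u_i),v=(v_i)$ in $\mathbb{N}_0^n$ write $u\le_s v$ iff there is a strictly increasing $\psi\colon\mathbb{N}\to\mathbb{N}$ with $u_i\le v_{\psi(i)}$ componentwise for all $i$. For $M,\widetilde M\in B$, $M\le'\widetilde M$ iff $M,\widetilde M$ lie both in $B_1$ or both in $B_2$ and $\xi(M)\le_s\xi(\widetilde M)$. For strictly increasing $\varphi$, $\widetilde\varphi$ is the substitution $y_i\mapsto y_{\varphi(i)}$, $z_i\mapsto z_{\varphi(i)}$. *)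

From HB Require Import structures.
From mathcomp Require Import all_boot all_order all_algebra.
Set Implicit Arguments. Unset Strict Implicit. Unset Printing Implicit Defensive.
Import Order.TTheory GRing.Theory Num.Theory.
Local Open Scope ring_scope.

(* Variables: (false, i) is the even variable y_(i+1), (true, i) is the odd
   variable z_(i+1).  Indices are shifted to start at 0. *)
Definition var := (bool * nat)%type.
Definition yv (i : nat) : var := (false, i).
Definition zv (i : nat) : var := (true, i).
Definition word := seq var.

(* Elements of the free unital associative algebra D<X>, represented as
   formal D-linear combinations of words; equality in D<X> is [peq]. *)
Definition poly (D : idomainType) := seq (D * word)%type.

Definition coef (D : idomainType) (p : poly D) (w : word) : D :=
  \sum_(t <- p | t.2 == w) t.1.
Definition peq (D : idomainType) (p q : poly D) : Prop :=
  forall w, coef p w = coef q w.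

Definition mono (D : idomainType) (w : word) : poly D := [:: (1, w)].
Definition onep (D : idomainType) : poly D := mono D [::].
Definition addp (D : idomainType) (p q : poly D) : poly D := p ++ q.
Definition scalep (D : idomainType) (c : D) (p : poly D) : poly D :=
  [seq (c * t.1, t.2) | t <- p].
Definition subp (D : idomainType) (p q : poly D) : poly D :=
  addp p (scalep (-1) q).
Definition mulp (D : idomainType) (p q : poly D) : poly D :=
  [seq (t.1 * s.1, t.2 ++ s.2) | t <- p, s <- q].
Definition bracket (D : idomainType) (p q : poly D) : poly D :=
  subp (mulp p q) (mulp q p).

Definition eval_word (D : idomainType) (sigma : var -> poly D) (w : word) : poly D :=
  foldr (fun v acc => mulp (sigma v) acc) (onep D) w.
Definition substp (D : idomainType) (sigma : var -> poly D) (p : poly D) : poly D :=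
  flatten [seq scalep t.1 (eval_word sigma t.2) | t <- p].

Definition wparity (w : word) : bool := odd (count (fun v : var => v.1) w).

Inductive lie (D : idomainType) : poly D -> Prop :=
| lie_var : forall v, lie (mono D [:: v])
| lie_zero : lie [::]
| lie_add : forall p q, lie p -> lie q -> lie (addp p q)
| lie_scale : forall c p, lie p -> lie (scalep c p)
| lie_bracket : forall p q, lie p -> lie q -> lie (bracket p q)
| lie_equiv : forall p q, peq p q -> lie p -> lie q.

Definition lieg (D : idomainType) (d : bool) (p : poly D) : Prop :=
  lie p /\ forall w, coef p w != 0 -> wparity w = d.

Definition admissible (D : idomainType) (sigma : var -> poly D) : Prop :=
  forall i, lieg false (sigma (yv i)) /\ lieg true (sigma (zv i)).

Inductive inI (D : idomainType) : poly D -> Prop :=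
| I_gen1 : inI (subp (mono D [:: yv 0; yv 1]) (mono D [:: yv 1; yv 0]))
| I_gen2 : inI (subp (mono D [:: zv 0; zv 1; zv 2]) (mono D [:: zv 2; zv 1; zv 0]))
| I_gen3 : inI (addp (mono D [:: yv 0; zv 0]) (mono D [:: zv 0; yv 0]))
| I_add : forall p q, inI p -> inI q -> inI (addp p q)
| I_mull : forall a p, inI p -> inI (mulp a p)
| I_mulr : forall a p, inI p -> inI (mulp p a)
| I_equiv : forall p q, peq p q -> inI p -> inI q
| I_subst : forall sigma p, admissible sigma -> inI p -> inI (substp sigma p).

Definition ys (w : word) : seq nat := [seq v.2 | v <- w & ~~ v.1].
Definition zs (w : word) : seq nat := [seq v.2 | v <- w & v.1].
Definition evens (s : seq nat) : seq nat := mkseq (fun k => nth 0%N s k.*2) (uphalf (size s)).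
Definition odds (s : seq nat) : seq nat := mkseq (fun k => nth 0%N s k.*2.+1) (size s)./2.

Definition inB1 (w : word) : bool := all (fun v : var => ~~ v.1) w && sorted leq (ys w).
Definition inB2 (w : word) : bool :=
  [&& w == [seq yv i | i <- ys w] ++ [seq zv i | i <- zs w],
      sorted leq (ys w), zs w != [::],
      sorted leq (evens (zs w)) & sorted leq (odds (zs w))].
Definition inB (w : word) : bool := inB1 w || inB2 w.

Definition xi1 (w : word) (i : nat) : nat := count (pred1 i) (ys w).
Definition xi2 (w : word) (i : nat) : nat := count (pred1 i) (evens (zs w)).
Definition xi3 (w : word) (i : nat) : nat := count (pred1 i) (odds (zs w)).

Definition strict_incr (f : nat -> nat) : Prop := forall i j, (i < j)%N -> (f i < f j)%N.

Definition le_s1 (u v : nat -> nat) : Prop :=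
  exists psi, strict_incr psi /\ forall i, (u i <= v (psi i))%N.
Definition le_s3 (u1 u2 u3 v1 v2 v3 : nat -> nat) : Prop :=
  exists psi, strict_incr psi /\
    forall i, [/\ (u1 i <= v1 (psi i))%N, (u2 i <= v2 (psi i))%N & (u3 i <= v3 (psi i))%N].

Definition le' (M M' : word) : Prop :=
  (inB1 M /\ inB1 M' /\ le_s1 (xi1 M) (xi1 M')) \/
  (inB2 M /\ inB2 M' /\ le_s3 (xi1 M) (xi2 M) (xi3 M) (xi1 M') (xi2 M') (xi3 M')).

Definition ren (D : idomainType) (phi : nat -> nat) (v : var) : poly D :=
  mono D [:: (v.1, phi v.2)].

Definition infinite_type (D : idomainType) : Prop :=
  forall s : seq D, exists x, x \notin s.

(** Modulo [I] the even variables commute, and [z_a z_b z_c = z_c z_b z_a]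
    lets one permute freely the [c]'s, and separately the [d]'s, of a word
    [z_(c_1) z_(d_1) z_(c_2) z_(d_2) ...].  Hence [y_(a_1) ... y_(a_k)] times
    such a word is determined modulo [I] by the multisets of its [a]'s, [c]'s
    and [d]'s, i.e. by [xi].  If [psi] witnesses [M <=' M'], these multisets
    for [psi(M)] are contained in those of [M']: [N] supplies the missing
    [y]'s and [P] interleaves the missing [c]'s and [d]'s, starting with a [d]
    when the [z]-part of [M] has odd length. *)
From Pilot Require Import Defs.
From mathcomp Require Import all_boot all_algebra zify.

Set Implicit Arguments.
Unset Strict Implicit.
Unset Printing Implicit Defensive.

Import GRing.Theory.

Notation Y s := [seq yv i | i <- s].
Notation Z s := [seq zv i | i <- s].

Section CongruenceModI.
Variable D : idomainType.
Local Open Scope ring_scope.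

Definition eqvI (w1 w2 : word) := inI (subp (mono D w1) (mono D w2)).

Lemma coef_cat (p q : Defs.poly D) w : coef (p ++ q) w = coef p w + coef q w.
Proof. by rewrite /coef big_cat. Qed.

Lemma coef_scalep c (p : Defs.poly D) w : coef (scalep c p) w = c * coef p w.
Proof. by rewrite /coef /scalep big_map big_distrr. Qed.

Lemma mulp_mono u v : mulp (mono D u) (mono D v) = mono D (u ++ v).
Proof. by rewrite /mulp /mono /= mulr1. Qed.

Lemma mulp_const c (p : Defs.poly D) : mulp [:: (c, [::])] p = scalep c p.
Proof. by rewrite /mulp /= cats0. Qed.

Lemma inI_nil : inI ([::] : Defs.poly D).
Proof. exact: (I_mull [::] (@I_gen1 D)). Qed.

Lemma eqvI_refl w : eqvI w w.
Proof.
apply: (I_equiv _ inI_nil) => w'.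
by rewrite /subp /addp coef_cat coef_scalep /coef big_nil mulN1r addrN.
Qed.

Lemma eqvI_sym w1 w2 : eqvI w1 w2 -> eqvI w2 w1.
Proof.
move=> /(I_mull [:: (-1, [::])]); rewrite mulp_const => I21.
apply: (I_equiv _ I21) => w.
rewrite /subp /addp coef_scalep !coef_cat !coef_scalep !mulN1r.
by rewrite opprD opprK addrC.
Qed.

Lemma eqvI_trans w1 w2 w3 : eqvI w1 w2 -> eqvI w2 w3 -> eqvI w1 w3.
Proof.
move=> I12 I23; apply: (I_equiv _ (I_add I12 I23)) => w.
rewrite /subp /addp !coef_cat !coef_scalep !mulN1r.
by rewrite addrA addrNK.
Qed.

Lemma eqvI_ctx u v w1 w2 : eqvI w1 w2 -> eqvI (u ++ w1 ++ v) (u ++ w2 ++ v).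
Proof.
move=> /(I_mulr (mono D v)) /(I_mull (mono D u)).
by rewrite /eqvI /subp /addp /scalep /mulp /mono /= !mul1r !mulr1.
Qed.

Lemma eqvI_cons x w1 w2 : eqvI w1 w2 -> eqvI (x :: w1) (x :: w2).
Proof. by move=> /(eqvI_ctx [:: x] [::]); rewrite !cats0. Qed.

Lemma eqvI_cat u1 u2 v1 v2 : eqvI u1 u2 -> eqvI v1 v2 -> eqvI (u1 ++ v1) (u2 ++ v2).
Proof.
move=> /(eqvI_ctx [::] v1) Iu /(eqvI_ctx u2 [::]); rewrite !cats0.
exact: eqvI_trans.
Qed.

Definition renw (phi : nat -> nat) (w : word) : word :=
  [seq (v.1, phi v.2) | v <- w].

Lemma eval_word_ren phi w : eval_word (ren D phi) w = mono D (renw phi w).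
Proof. by elim: w => //= v w ->; rewrite mulp_mono. Qed.

Lemma substp_ren_mono phi w : substp (ren D phi) (mono D w) = mono D (renw phi w).
Proof. by rewrite /substp /= eval_word_ren /scalep /mono /= mulr1. Qed.

Lemma ren_admissible phi : admissible (ren D phi).
Proof.
move=> i; split; split=> [|w]; try exact: lie_var;
  by rewrite /coef big_cons big_nil /=; case: ifP => [/eqP <-|]; rewrite ?eqxx.
Qed.

Lemma eqvI_ren phi w1 w2 : eqvI w1 w2 -> eqvI (renw phi w1) (renw phi w2).
Proof.
move=> /(I_subst (ren_admissible phi)).
by rewrite /eqvI /substp /subp /addp /scalep /= !eval_word_ren /mono /= !mulr1.
Qed.

Lemma eqvI_yC a b : eqvI [:: yv a; yv b] [:: yv b; yv a].
Proof. exact: (eqvI_ren (nth 0%N [:: a; b]) (@I_gen1 D)). Qed.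

Lemma eqvI_zrev a b c : eqvI [:: zv a; zv b; zv c] [:: zv c; zv b; zv a].
Proof. exact: (eqvI_ren (nth 0%N [:: a; b; c]) (@I_gen2 D)). Qed.

End CongruenceModI.

Lemma count_map_inj_le (T T' : eqType) (f : T -> T') (s : seq T) (s' : seq T') :
  injective f -> (forall i, count_mem i s <= count_mem (f i) s') ->
  forall j, count_mem j (map f s) <= count_mem j s'.
Proof.
move=> f_inj le_s j; case: (boolP (j \in map f s)) => [/mapP[i _ ->]|/count_memPn-> //].
rewrite count_map; under eq_count => k do rewrite /= inj_eq //.
exact: le_s.
Qed.

Lemma count_le_perm_cat (T : eqType) (s s' : seq T) :
  (forall i, count_mem i s <= count_mem i s') -> exists t, perm_eq (s ++ t) s'.
Proof.
case/count_subseqP=> s1 /perm_to_subseq[t Pt] P.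
by exists t; rewrite perm_sym (perm_trans Pt) // perm_cat2r perm_sym.
Qed.

Lemma oddsC x s : odds (x :: s) = evens s. Proof. by []. Qed.

Lemma evensC x s : evens (x :: s) = x :: odds s.
Proof. by rewrite /evens /odds /mkseq /= -[1]/(1 + 0) iotaDl -map_comp. Qed.

Lemma size_evens s : size (evens s) = uphalf (size s).
Proof. exact: size_mkseq. Qed.

Lemma size_odds s : size (odds s) = (size s)./2.
Proof. exact: size_mkseq. Qed.

Lemma evens_odds_cat s t :
  evens (s ++ t) = evens s ++ (if odd (size s) then odds t else evens t) /\
  odds (s ++ t) = odds s ++ (if odd (size s) then evens t else odds t).
Proof.
elim: s => [|x s [IHe IHo]] //.
by rewrite cat_cons !evensC !oddsC IHe IHo /=; case: (odd (size s)).
Qed.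

Lemma evens_odds_map (f : nat -> nat) s :
  evens (map f s) = map f (evens s) /\ odds (map f s) = map f (odds s).
Proof.
by elim: s => [|x s [IHe IHo]] //; rewrite map_cons !evensC !oddsC IHe IHo.
Qed.

Fixpoint interleave (e o : seq nat) : seq nat :=
  if e is x :: e' then if o is y :: o' then x :: y :: interleave e' o' else e
  else e.

Lemma evens_odds_interleave e o : size o <= size e <= (size o).+1 ->
  evens (interleave e o) = e /\ odds (interleave e o) = o.
Proof.
elim: e o => [|x e IH] [|y o] //=; first by case: e {IH}.
by move=> /IH[Ee Eo]; rewrite !(evensC, oddsC) Ee Eo.
Qed.

Lemma evens_odds_complement (s s' : seq nat) :
  (forall i, count_mem i (evens s) <= count_mem i (evens s')) ->
  (forall i, count_mem i (odds s) <= count_mem i (odds s')) ->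
  exists t, perm_eq (evens (s ++ t)) (evens s') /\ perm_eq (odds (s ++ t)) (odds s').
Proof.
move=> /count_le_perm_cat[e Pe] /count_le_perm_cat[o Po].
have := perm_size Pe; have := perm_size Po.
rewrite !size_cat !size_evens !size_odds !uphalf_half.
case odd_s: (odd (size s)) => size_o size_e;
  [exists (interleave o e) | exists (interleave e o)];
  rewrite (evens_odds_cat _ _).1 (evens_odds_cat _ _).2 odd_s
    (evens_odds_interleave _).1 ?(evens_odds_interleave _).2 //;
  by move: size_e size_o; case: (odd (size s')) => /=; lia.
Qed.

Section WordsModI.
Variable D : idomainType.

Lemma eqvI_Y_rem x a : x \in a -> eqvI D (Y a) (Y (x :: rem x a)).
Proof.
elim: a => [|y a IH] //=; rewrite inE eq_sym.
case: eqP => [-> _|_ /IH Ia]; first exact: eqvI_refl.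
apply: eqvI_trans (eqvI_cons (yv y) Ia) _.
exact: (eqvI_ctx [::] (Y (rem x a)) (eqvI_yC D y x)).
Qed.

Lemma eqvI_Y_perm a a' : perm_eq a a' -> eqvI D (Y a) (Y a').
Proof.
elim: a a' => [|x a IH] a' Pa.
  by move: Pa; rewrite perm_sym => /perm_nilP ->; exact: eqvI_refl.
have xa' : x \in a' by rewrite -(perm_mem Pa) mem_head.
apply: eqvI_trans (eqvI_sym (eqvI_Y_rem xa')) => /=; apply/eqvI_cons/IH.
by rewrite -(perm_cons x) (perm_trans Pa) // perm_to_rem.
Qed.

Lemma eqvI_Z_front x b : x \in evens b ->
  exists c, [/\ eqvI D (Z b) (Z (x :: c)),
                perm_eq (evens b) (x :: odds c) & perm_eq (odds b) (evens c)].
Proof.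
have [n] := ubnP (size b); elim: n b => // n IH [|p [|q b]] //= size_b.
  by rewrite evensC inE => /eqP ->; exists [::]; split=> //; exact: eqvI_refl.
rewrite evensC oddsC inE; case: eqP => [-> _|_ /(IH b (ltnW size_b))[c [Ib Pe Po]]].
  by exists (q :: b); split; rewrite ?(evensC, oddsC) ?perm_refl //; exact: eqvI_refl.
exists [:: q, p & c]; split; rewrite ?(evensC, oddsC) /=.
- apply: eqvI_trans (eqvI_cons _ (eqvI_cons _ Ib)) _.
  exact: (eqvI_ctx [::] (Z c) (eqvI_zrev D p q x)).
- by rewrite (perm_trans (_ : perm_eq _ [:: p, x & odds c])) ?perm_cons //
    -[[:: p, x & _]]/([:: p] ++ [:: x] ++ _) perm_catCA.
- by rewrite perm_cons.
Qed.

Lemma eqvI_Z_perm b b' : perm_eq (evens b) (evens b') -> perm_eq (odds b) (odds b') ->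
  eqvI D (Z b) (Z b').
Proof.
elim: b b' => [|x b IH] b' Pe Po.
  have /size0nil -> : size b' = 0.
    by move: (perm_size Pe); rewrite !size_evens; case: (size b').
  exact: eqvI_refl.
have xb' : x \in evens b' by rewrite -(perm_mem Pe) evensC mem_head.
have [c [Ib' Pe' Po']] := eqvI_Z_front xb'.
apply: eqvI_trans (eqvI_sym Ib') => /=; apply/eqvI_cons/IH.
- by rewrite -(oddsC x); exact: perm_trans Po Po'.
- by rewrite -(perm_cons x) -evensC; exact: perm_trans Pe Pe'.
Qed.

End WordsModI.

Lemma inB_YZ w : inB w -> w = Y (ys w) ++ Z (zs w).
Proof.
case/orP=> [/andP[+ _]|/and5P[/eqP //]].
by elim: w => //= -[[] i] w IH //= /IH {1}->.
Qed.

Lemma inB1_Y s : sorted leq s -> inB1 (Y s).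
Proof.
rewrite /inB1 /ys filter_map -map_comp /= filter_predT map_id => ->.
by rewrite andbT all_map; apply/allP.
Qed.

Lemma renw_YZ phi a b : renw phi (Y a ++ Z b) = Y (map phi a) ++ Z (map phi b).
Proof. by rewrite /renw map_cat -!map_comp. Qed.

Lemma le'_dominance M M' : le' M M' ->
  exists psi, strict_incr psi /\ forall i,
    [/\ count_mem i (ys M) <= count_mem (psi i) (ys M'),
        count_mem i (evens (zs M)) <= count_mem (psi i) (evens (zs M')) &
        count_mem i (odds (zs M)) <= count_mem (psi i) (odds (zs M'))].
Proof.
case=> [[/andP[yM _] [_ [psi [psi_incr le_psi]]]]|[_ [_ ?]] //].
have -> : zs M = [::].
  by rewrite /zs (eq_in_filter (a2 := pred0)) ?filter_pred0 // => v /(allP yM)/negbTE.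
by exists psi; split=> // i; split; rewrite ?leq0n //; exact: le_psi.
Qed.

Theorem mainTheorem14 (D : idomainType) (Dinf : infinite_type D) (M M' : word) :
  inB M -> inB M' -> le' M M' ->
  exists (phi : nat -> nat) (N : word) (t : seq nat),
    [/\ strict_incr phi, inB1 N &
        inI (subp (mulp (mulp (mono D N) (substp (ren D phi) (mono D M)))
                        (mono D [seq zv i | i <- t]))
                  (mono D M'))].
Proof.
move=> BM BM' /le'_dominance[psi [psi_incr dom]].
have psi_inj : injective psi := incn_inj (leq_mono psi_incr).
have [Ee Eo] := evens_odds_map psi (zs M).
have [n Pn] : exists n, perm_eq (map psi (ys M) ++ n) (ys M').
  by apply/count_le_perm_cat/count_map_inj_le => // i; case: (dom i).
have [t [Pe Po]] : exists t,
    perm_eq (evens (map psi (zs M) ++ t)) (evens (zs M')) /\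
    perm_eq (odds (map psi (zs M) ++ t)) (odds (zs M')).
  by apply: evens_odds_complement; rewrite ?Ee ?Eo;
    apply: count_map_inj_le => // i; case: (dom i).
exists psi, (Y (sort leq n)), t; split => //; first exact/inB1_Y/sort_sorted/leq_total.
rewrite substp_ren_mono !mulp_mono -/(eqvI D _ _) (inB_YZ BM) (inB_YZ BM') renw_YZ.
rewrite catA -map_cat -catA -map_cat.
apply: eqvI_cat; last exact: eqvI_Z_perm.
by apply: eqvI_Y_perm; rewrite perm_catC (perm_trans _ Pn) // perm_cat2l perm_sort.
Qed.
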